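(* Let $\gamma$ be a join-irreducible element of the weak order on $B_n$ with associated signed subset $A$ and associated $m,M$ as described below. Then (i) $\deg(\gamma)=1$ if and only if $|(m,M)\cap(\pm[n])|=0$; and (ii) $\deg(\gamma)=2$ if and only if either $|(m,M)\cap(\pm[n])|=1$ or $(m,M)=(-2,2)$.
   Context: $B_n$: signed permutations of $\pm[n]=\{\pm1,\dots,\pm n\}$ ($x(-i)=-x(i)$), full notation $x_{-n},\dots,x_{-1},x_1,\dots,x_n$; Coxeter generators $S=\{s_0,\dots,s_{n-1}\}$ with $s_0=(-1\ 1)$, $s_i=(i\ i{+}1)(-i{-}1\ {-i})$. Weak order $v\le w$ iff $I(v)\subseteq I(w)$, $I(w)$ the reflections $t$ with $\ell(tw)<\ell(w)$. An element is join-irreducible if it covers exactly one element. A signed subset of $[n]$ is $A\subseteq\pm[n]$ with $\{-i,i\}\not\subseteq A$ for all $i$. Let $-A=\{a:-a\in A\}$, $\pm A=A\cup-A$, complements taken in $\pm[n]$, $m=\min A$, and $M=-m$ if $|A|=n$, otherwise $M=\max(\pm A)^c$. Join-irreducibles of $B_n$ correspond bijectively to signed subsets with $M>m$: the full notation of $\gamma$ lists the elements of $-A$ in increasing order, then those of $(\pm A)^c$ in increasing order, then those of $A$ in increasing order. $(m,M)$ denotes the open real interval. The degree $\deg(\gamma)$ is the smallest $|K|$ over $K\subseteq S$ with $\gamma$ in the subgroup generated by $K$. *)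

From HB Require Import structures.
From mathcomp Require Import all_boot all_order all_fingroup all_algebra.
Set Implicit Arguments. Unset Strict Implicit. Unset Printing Implicit Defensive.
Import Order.TTheory GRing.Theory Num.Theory.

(* The set +-[n] is encoded as sT n := 'I_n * bool :
   (i, false) stands for the integer i+1 and (i, true) for -(i+1). *)
Definition sT (n : nat) := ('I_n * bool)%type.

Definition sval {n} (x : sT n) : int :=
  (if x.2 then - (x.1.+1)%:Z else (x.1.+1)%:Z)%R.

Definition sneg {n} (x : sT n) : sT n := (x.1, ~~ x.2).

Section Bn.
Variable n : nat.
Local Notation T := (sT n).

Definition Bn : {set {perm T}} :=
  [set w : {perm T} | [forall x : T, w (sneg x) == sneg (w x)]].

(* Coxeter generators s_0 = (-1 1), s_i = (i i+1)(-i-1 -i) for 1 <= i <= n-1;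
   the generator with index i : 'I_n is s_i. *)
Definition ordpred (i : 'I_n) : 'I_n :=
  Ordinal (leq_ltn_trans (leq_pred i) (ltn_ord i)).

Definition gen (i : 'I_n) : {perm T} :=
  if (i : nat) == 0%N then tperm ((i, false) : T) (i, true)
  else (tperm (ordpred i, false) (i, false) * tperm (ordpred i, true) (i, true))%g.

(* Coxeter length: the least k such that w is a product of k generators
   (searched below the bound (2n)!, larger than |B_n|). *)
Definition has_word (w : {perm T}) (k : nat) : bool :=
  [exists t : k.-tuple 'I_n, (\prod_(i <- t) gen i)%g == w].

Definition len (w : {perm T}) : nat :=
  find (has_word w) (iota 0 (#|{perm T}|).+1).

Definition reflections : {set {perm T}} :=
  [set (gen i ^ w)%g | i : 'I_n, w : {perm T} in Bn].

(* I(w) = { t reflection | l(t w) < l(w) }, where t w is the composite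
   "first w, then t"; in MathComp's convention this is (w * t)%g. *)
Definition Inv (w : {perm T}) : {set {perm T}} :=
  [set t in reflections | len (w * t)%g < len w].

Definition weak_le (v w : {perm T}) : bool := Inv v \subset Inv w.
Definition weak_lt (v w : {perm T}) : bool := (v != w) && weak_le v w.

Definition covers (w v : {perm T}) : bool :=
  [&& v \in Bn, weak_lt v w &
      [forall u in Bn, ~~ (weak_lt v u && weak_lt u w)]].

Definition join_irreducible (w : {perm T}) : bool :=
  #|[set v in Bn | covers w v]| == 1%N.

Definition deg (w : {perm T}) : nat :=
  \big[minn/n]_(K : {set 'I_n} | w \in <<[set gen i | i in K]>>%g) #|K|.

(* Full notation x_{-n},...,x_{-1},x_1,...,x_n of w, with x_i = w(i). *)
Definition positions : seq T :=
  [seq (rev_ord i, true) | i <- enum 'I_n] ++ [seq (i, false) | i <- enum 'I_n].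

Definition full_notation (w : {perm T}) : seq int :=
  [seq sval (w p) | p <- positions].

Definition signed_subset (A : {set T}) : bool :=
  [forall i : 'I_n, ~~ (((i, false) \in A) && ((i, true) \in A))].

Definition intle (a b : int) : bool := (a <= b)%R.

Definition valA (A : {set T}) : seq int := [seq sval x | x <- enum A].
Definition valnegA (A : {set T}) : seq int := [seq (- sval x)%R | x <- enum A].
Definition valcompl (A : {set T}) : seq int :=
  [seq sval x | x <- [seq y <- enum [set: T] | (y \notin A) && (sneg y \notin A)]].

Definition assoc_notation (A : {set T}) : seq int :=
  sort intle (valnegA A) ++ sort intle (valcompl A) ++ sort intle (valA A).

Definition mA (A : {set T}) : int := head 0%R (sort intle (valA A)).
Definition MA (A : {set T}) : int :=
  if #|A| == n then (- mA A)%R else last 0%R (sort intle (valcompl A)).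

Definition cnt (A : {set T}) : nat :=
  #|[set x : T | (mA A < sval x)%R && (sval x < MA A)%R]|.

End Bn.

(* For [w] in [B_n], say that [w] moves the threshold [0 <= i < n]
   if it does not preserve the set of values greater than [i].  Every Coxeter
   generator other than [s_i] preserves that set, so [w] lies in the parabolic
   subgroup generated by [K] only if [K] contains every threshold moved by [w].
   Conversely [w] is a product of generators at thresholds it moves: the
   largest value [k+1] moved by [w] is sent back in place by a chain
   [s_a ... s_k] (preceded, if [w (k+1) < 0], by the flip [s_0] conjugated by
   such a chain), and induction applies.  Hence [deg w] is the number of
   thresholds moved by [w].
   For the join-irreducible [gamma] attached to [A], the entries [x_1 ... x_n]
   of its full notation are the positive part of the complement of [+-A]
   followed by [A], both increasing, so that [M] and [m] are adjacent entries.
   From this, [gamma] moves exactly the thresholds [i] with [m <= i < M] or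
   [i < -m]: [deg gamma] is [M - m] if [m > 0] and [max(M, -m)] if [m < 0],
   while [(m, M)] contains [M - m - 1], resp. [M - m - 2], elements of [+-[n]].  Join-irreducibility only serves to exclude
   [gamma = 1]. *)

From Pilot Require Import Defs.
From mathcomp Require Import all_boot all_order all_fingroup all_algebra zify.
Import Order.TTheory GRing.Theory Num.Theory.

Set Implicit Arguments. Unset Strict Implicit. Unset Printing Implicit Defensive.

(* [sval] is also the projection of [sig]. *)
Local Notation sval := Defs.sval.

Lemma card_ord_range n (S : {set 'I_n}) lo hi : hi <= n ->
  (forall j : 'I_n, (j \in S) = (lo <= j < hi)) -> #|S| = hi - lo.
Proof.
move=> hin SE; rewrite (eq_card (B := [set j : 'I_n | lo <= j < hi])) => [|j]; last first.
  by rewrite SE inE.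
rewrite -sum1dep_card -[LHS](big_mkord (fun i => lo <= i < hi) (fun _ => 1)).
rewrite -(big_nat_widen _ _ _ (fun i => lo <= i)) // -[RHS]muln1 -sum_nat_const_nat.
by rewrite (big_nat_widenl _ 0 _ predT) ?leq0n.
Qed.

(* A shortest word has pairwise distinct prefix products: otherwise the factor
   between two equal ones could be cut out. *)
Lemma mem_gen_short_word (gT : finGroupType) (I : finType) (s : I -> gT) (x : gT) :
  x \in <<[set s i | i : I]>>%g ->
  exists2 t : seq I, (size t <= #|gT|)%N & x = (\prod_(i <- t) s i)%g.
Proof.
move=> xG; pose word k := [exists t : k.-tuple I, x == (\prod_(i <- t) s i)%g].
have word_seq (t : seq I) : x = (\prod_(i <- t) s i)%g -> word (size t).
  by move=> xt; apply/existsP; exists (in_tuple t); rewrite xt.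
have has_word : exists k, word k.
  case/gen_prodgP: xG => k [c Hc xc].
  have /fin_all_exists [d Hd] : forall i, exists j, c i = s j.
    by move=> i; have /imsetP[j _ ->] := Hc i; exists j.
  exists (size (map d (index_enum 'I_k))); apply: word_seq.
  by rewrite xc big_map; apply: eq_bigr => i _; rewrite Hd.
case: (ex_minnP has_word) => k /existsP[t /eqP xt] kmin.
exists t; rewrite // size_tuple leqNgt; apply/negP => klong.
pose prefix (j : 'I_k.+1) := (\prod_(i <- take j t) s i)%g.
have /injectivePn[j1 [j2 j12 eq12]] : ~~ injectiveb prefix.
  by apply: contraL klong => /injectiveP/leq_card; rewrite card_ord -leqNgt => /ltnW.
wlog lt12 : j1 j2 j12 eq12 / (j1 < j2)%N.
  move=> W; case: (ltngtP j1 j2) => [|/W|/val_inj/eqP]; [exact: W | | by rewrite (negPf j12)].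
  by apply; rewrite // eq_sym.
have : word (size (take j1 t ++ drop j2 t)).
  apply: word_seq; rewrite big_cat -/(prefix j1) eq12 /prefix -big_cat cat_take_drop //.
move/kmin; rewrite size_cat size_drop size_takel size_tuple; have := ltn_ord j2; lia.
Qed.

Section IncreasingSequences.
Local Open Scope ring_scope.

Lemma incr_gap (f : nat -> int) (lo hi : nat) :
    (forall j, (lo <= j)%N -> (j.+1 < hi)%N -> f j < f j.+1) ->
  forall i k, (lo <= i <= k)%N -> (k < hi)%N -> f i + (k - i)%:Z <= f k.
Proof.
move=> incr i k /andP[loi]; rewrite leq_eqVlt => /predU1P[->|]; first by rewrite subnn addr0.
elim: k => // k IH; rewrite ltnS leq_eqVlt => /predU1P[<- khi|ik khi].
  by have := incr i loi khi; rewrite subSnn; lia.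
by have := IH ik (ltnW khi); have := incr k (leq_trans loi (ltnW ik)) khi; lia.
Qed.

Lemma sort_intle_lt (s : seq int) (i j : nat) : uniq s -> (i < j < size s)%N ->
  nth 0 (sort intle s) i < nth 0 (sort intle s) j.
Proof.
move=> us /andP[ij js]; have ss : sorted <%O (sort <=%O s) by rewrite sort_lt_sorted.
by rewrite (lt_sorted_ltn_nth 0 ss) ?inE ?size_sort ?ij //; apply: ltn_trans js.
Qed.

Lemma incr_eq_succ (f : nat -> int) (n : nat) :
    (forall j, (j.+1 < n)%N -> f j < f j.+1) -> 0 < f 0%N -> f n.-1 <= n%:Z ->
  forall j, (j < n)%N -> f j = j.+1%:Z.
Proof.
move=> incr f0 fn j jn; have gap := @incr_gap f 0 n (fun j _ => incr j).
by have := gap 0%N j isT jn; have := gap j n.-1 _ _; rewrite ?leq0n /=; lia.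
Qed.

End IncreasingSequences.

Section SignedPermutations.
Variable n : nat.
Local Notation T := (sT n).
Local Open Scope ring_scope.
Local Notation parabolic K := (<<[set gen i | i in K]>>%g).

Lemma sval_sneg (x : T) : sval (sneg x) = - sval x.
Proof. by case: x => i [] /=; rewrite /sval /= ?opprK. Qed.

Lemma sval_pos (j : 'I_n) : sval ((j, false) : T) = j.+1%:Z.
Proof. by []. Qed.

Lemma sval_neg (j : 'I_n) : sval ((j, true) : T) = - j.+1%:Z.
Proof. by []. Qed.

Lemma sval_inj : injective (sval : T -> int).
Proof.
case=> i b [j c]; rewrite /sval /=.
by case: b; case: c => /= h; try lia; congr (_, _); apply/val_inj => /=; lia.
Qed.

Lemma sval_neq0 (x : T) : sval x != 0.
Proof. by case: x => i []; rewrite /sval /=; lia. Qed.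

Lemma abs_sval_le (x : T) : `|sval x| <= n%:Z.
Proof. by case: x => i b; have := ltn_ord i; rewrite /sval; case: b => /=; lia. Qed.

Lemma card_sT_split (P : pred T) :
  #|[set y | P y]| =
    (#|[set j : 'I_n | P (j, false)]| + #|[set j : 'I_n | P (j, true)]|)%N.
Proof.
rewrite -!sum1dep_card !big_mkcond /=.
rewrite (eq_bigr (fun y => if P (y.1, y.2) then 1 else 0)%N); last by case.
rewrite -(pair_bigA _ (fun j b => if P (j, b) then 1 else 0)%N).
rewrite [in RHS]big_mkcond [X in (_ + X)%N]big_mkcond -big_split /=.
by apply: eq_bigr => j _; rewrite big_bool addnC.
Qed.

Lemma BnP (w : {perm T}) : reflect (forall x, w (sneg x) = sneg (w x)) (w \in Bn n).
Proof. by rewrite inE; apply: (iffP forallP) => H x; [apply/eqP | rewrite H]. Qed.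

Lemma Bn_group_set : group_set (Bn n).
Proof.
apply/group_setP; split; first by apply/BnP => x; rewrite !perm1.
by move=> u v /BnP Hu /BnP Hv; apply/BnP => x; rewrite !permM Hu Hv.
Qed.
Canonical Bn_group := group Bn_group_set.

Lemma sval_Bn_sneg (w : {perm T}) x : w \in Bn n -> sval (w (sneg x)) = - sval (w x).
Proof. by move/BnP->; rewrite sval_sneg. Qed.

Lemma Bn_eq (u v : {perm T}) : u \in Bn n -> v \in Bn n ->
  (forall j : 'I_n, sval (u (j, false)) = sval (v (j, false))) -> u = v.
Proof.
move=> /BnP Hu /BnP Hv H; apply/permP => -[j []]; last exact/sval_inj/H.
by rewrite -[(j, true)]/(sneg (j, false)) Hu Hv; congr sneg; apply/sval_inj/H.
Qed.

Definition gen_val (i : nat) (v : int) : int :=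
  if i == 0%N then (if v == 1 then -1 else if v == -1 then 1 else v)
  else if v == i%:Z then (i.+1)%:Z else if v == (i.+1)%:Z then i%:Z
  else if v == - i%:Z then - (i.+1)%:Z else if v == - (i.+1)%:Z then - i%:Z else v.

Lemma gen_valN i v : gen_val i (- v) = - gen_val i v.
Proof. by rewrite /gen_val; case: eqP => i0; repeat (case: eqP => /=); lia. Qed.

Lemma gen_valK i : involutive (gen_val i).
Proof. by move=> v; rewrite /gen_val; case: eqP => i0; repeat (case: eqP => /=); lia. Qed.

Lemma tpermE (x y z : T) : tperm x y z = if z == x then y else if z == y then x else z.
Proof. by case: tpermP => [->|->|/eqP/negPf-> /eqP/negPf->]; rewrite ?eqxx //; case: eqP. Qed.

Lemma sval_gen (i : 'I_n) (x : T) : sval (gen i x) = gen_val i (sval x).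
Proof.
rewrite /gen /gen_val; case: x => j b; have := ltn_ord j.
case: eqP => [i0|ni0].
  rewrite tpermE !xpair_eqE -!val_eqE /= i0 /sval.
  by case: b => /=; repeat case: eqP => /=; lia.
rewrite permM [tperm (ordpred i, false) _ _]tpermE.
rewrite !(fun_if (tperm (ordpred i, true) (i, true))) !tpermE !xpair_eqE -!val_eqE /= /sval.
by case: b => /=; repeat (case: eqP => /=); lia.
Qed.

Lemma gen_Bn (i : 'I_n) : gen i \in Bn n.
Proof. by apply/BnP => x; apply: sval_inj; rewrite sval_gen !sval_sneg sval_gen gen_valN. Qed.

Lemma gen_involutive (i : 'I_n) : (gen i * gen i)%g = 1%g.
Proof. by apply/permP => x; apply: sval_inj; rewrite permM perm1 !sval_gen gen_valK. Qed.

Definition upper (i : nat) : {set T} := [set x | i%:Z < sval x].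
Definition high (k : nat) : {set T} := [set x | k%:Z < `|sval x|].

(* The thresholds moved by [w]; by [support_sub] and [mem_parabolic_support] it
   is the least [K] such that [w] is in the subgroup generated by [K]. *)
Definition support (w : {perm T}) : {set 'I_n} :=
  [set i : 'I_n | w \notin 'N(upper i | 'P)%g].

Lemma in_support (w : {perm T}) (i : 'I_n) :
  (i \in support w) = (w \notin 'N(upper i | 'P)%g).
Proof. by rewrite inE. Qed.

Lemma astabs_permP (S : {set T}) (w : {perm T}) :
  reflect {in S, forall x, w x \in S} (w \in 'N(S | 'P)%g).
Proof.
rewrite !inE /=; apply: (iffP subsetP) => H x /H; by rewrite inE.
Qed.

Lemma astab_fix (S : {set T}) (w : {perm T}) x :
  w \in 'C(S | 'P)%g -> x \in S -> w x = x.
Proof. exact: astab_act. Qed.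

Lemma gen_astabs_upper (i : nat) (j : 'I_n) :
  (j : nat) != i -> gen j \in 'N(upper i | 'P)%g.
Proof.
move=> ji; apply/astabs_permP => x; rewrite !inE sval_gen /gen_val.
by case: eqP => j0; repeat (case: eqP => /= ?); lia.
Qed.

Lemma gen_astab_high (i : 'I_n) : gen i \in 'C(high i.+1 | 'P)%g.
Proof.
apply/astabP => x; rewrite inE => hx; apply: sval_inj; rewrite sval_gen /gen_val.
by case: eqP => i0; repeat (case: eqP => /= ?); lia.
Qed.

Lemma parabolic_Bn (K : {set 'I_n}) : parabolic K \subset Bn n.
Proof. by rewrite gen_subG; apply/subsetP => _ /imsetP[i _ ->]; apply: gen_Bn. Qed.

Lemma mem_parabolic (K : {set 'I_n}) (i : 'I_n) : i \in K -> gen i \in parabolic K.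
Proof. by move=> iK; apply/mem_gen/imset_f. Qed.

Lemma support_sub (K : {set 'I_n}) (w : {perm T}) :
  w \in parabolic K -> support w \subset K.
Proof.
move=> wK; apply/subsetP => i; rewrite in_support; apply: contraR => iK.
have: parabolic K \subset 'N(upper i | 'P)%g.
  rewrite gen_subG; apply/subsetP => _ /imsetP[j jK ->]; apply: gen_astabs_upper.
  by apply: contraNneq iK => /val_inj <-.
by move/subsetP; apply.
Qed.

Lemma support_moved (w : {perm T}) (i : 'I_n) y :
    i%:Z < sval y /\ sval (w y) <= i%:Z \/ sval y <= i%:Z /\ i%:Z < sval (w y) ->
  i \in support w.
Proof.
move=> moved; rewrite in_support; apply/negP => /(astabs_act y).
by rewrite /= !inE /aperm; lia.
Qed.

Lemma astab_high_le (k l : nat) : (k <= l)%N -> 'C(high k | 'P)%g \subset 'C(high l | 'P)%g.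
Proof. by move=> kl; apply/astabS/subsetP => x; rewrite !inE; lia. Qed.

Lemma parabolic_chain_up (K : {set 'I_n}) (a b : nat) : (a <= b < n)%N ->
    (forall i : 'I_n, (a < i <= b)%N -> i \in K) ->
  exists2 c, c \in parabolic K :&: 'C(high b.+1 | 'P)%g &
    forall x, sval x = a.+1 -> sval (c x) = b.+1.
Proof.
elim: b => [|b IH] hab hK.
  by exists 1%g => [|x hx]; [exact: group1 | rewrite perm1; lia].
case: (ltnP a b.+1) => ha; last first.
  by exists 1%g => [|x hx]; [exact: group1 | rewrite perm1; lia].
have [|i hi|c cK Hc] := IH; [lia | apply: hK; lia |].
have bn : (b.+1 < n)%N by lia.
exists (c * gen (Ordinal bn))%g => [|x /Hc hx].
  move: cK; rewrite inE => /andP[cK cH].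
  rewrite inE groupM ?mem_parabolic ?hK //=; last by lia.
  by rewrite groupM ?gen_astab_high // (subsetP (astab_high_le (leqnSn _))).
by rewrite permM sval_gen hx /gen_val /= eqxx.
Qed.

(* The conjugate of [s_0] by a chain carrying [1] to [a+1] flips [a+1]. *)
Lemma parabolic_chain_flip (K : {set 'I_n}) (a : nat) : (a < n)%N ->
    (forall i : 'I_n, (i <= a)%N -> i \in K) ->
  exists2 c, c \in parabolic K :&: 'C(high a.+1 | 'P)%g &
    forall x, sval x = - a.+1%:Z -> sval (c x) = a.+1.
Proof.
move=> an hK; have n0 : (0 < n)%N by lia.
pose s0 := gen (Ordinal n0).
have [|i hi|e] := @parabolic_chain_up K 0 a; [lia | apply: hK; lia |].
rewrite inE => /andP[eK eH] He.
have s0K : s0 \in parabolic K by rewrite mem_parabolic ?hK.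
have s0H : s0 \in 'C(high a.+1 | 'P)%g.
  by apply: subsetP (gen_astab_high _); apply: astab_high_le.
exists (s0 ^ e)%g => [|x hx]; first by rewrite inE !groupJ.
have e_neg1 : e (Ordinal n0, true) = x.
  apply: sval_inj; rewrite -[(_, true)]/(sneg (_, false)) sval_Bn_sneg ?He //.
  exact: subsetP (parabolic_Bn K) _ eK.
by rewrite -e_neg1 permJ He // sval_gen.
Qed.

Lemma parabolic_chain (K : {set 'I_n}) (k : nat) (y : T) : (k < n)%N -> `|sval y| <= k.+1 ->
    (forall i : 'I_n, sval y <= i%:Z -> (i <= k)%N -> i \in K) ->
  exists2 c, c \in parabolic K :&: 'C(high k.+1 | 'P)%g & sval (c y) = k.+1.
Proof.
case: y => j [] kn hy hK; rewrite /sval /= in hy hK.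
  have [|i hi|c1 c1K Hc1] := @parabolic_chain_flip K j; [lia | apply: hK; lia |].
  have [|i hi|c2 c2K Hc2] := @parabolic_chain_up K j k; [lia | apply: hK; lia |].
  exists (c1 * c2)%g; last by rewrite permM Hc2 ?Hc1.
  apply: groupM => //; move: c1K; rewrite inE => /andP[c1K c1H].
  by rewrite inE c1K (subsetP (astab_high_le _) _ c1H) //; lia.
have [|i hi|c cK Hc] := @parabolic_chain_up K j k; [lia | apply: hK; lia |].
by exists c; rewrite ?Hc.
Qed.

Lemma astab_high0 (w : {perm T}) : w \in 'C(high 0 | 'P)%g -> w = 1%g.
Proof.
move/astabP => H; apply/permP => x; rewrite perm1; apply: H.
by rewrite inE; have := sval_neq0 x; lia.
Qed.

Lemma astab_high_succ (w : {perm T}) (k : 'I_n) : w \in Bn n ->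
  w \in 'C(high k.+1 | 'P)%g -> w (k, false) = (k, false) -> w \in 'C(high k | 'P)%g.
Proof.
move=> wB wH wk; apply/astabP => x; rewrite inE /= /aperm => hx.
have [hx1|hx1] := ltrP k.+1%:Z `|sval x|; first by rewrite (astab_fix wH) // inE.
have [->|->] : x = (k, false) \/ x = sneg (k, false).
  by case: x hx hx1 => j [] hx hx1; [right|left]; congr (_, _);
    apply/val_inj; rewrite /sval /= in hx hx1 *; lia.
  exact: wk.
by rewrite (BnP _ wB) wk.
Qed.

(* Induction on the largest absolute value moved by [w]. *)
Lemma mem_parabolic_support (w : {perm T}) : w \in Bn n -> w \in parabolic (support w).
Proof.
suff fixing_high k : forall w,
    w \in Bn n -> w \in 'C(high k | 'P)%g -> w \in parabolic (support w).
  move=> wB; apply: (fixing_high n) => //; apply/astabP => x; rewrite inE.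
  by have := abs_sval_le x; lia.
elim: k => [|k IH] {}w wB wH; first by rewrite (astab_high0 wH) group1.
have [kn|nk] := ltnP k n; last first.
  by apply: IH => //; apply/astabP => x; rewrite inE; have := abs_sval_le x; lia.
pose k' := Ordinal kn; pose y := w (k', false); have k'E : k' = k :> nat by [].
have hy : `|sval y| <= k.+1.
  rewrite leNgt; apply/negP => hy; have : w y = y by apply: (astab_fix wH); rewrite inE.
  by move/perm_inj => yk; move: hy; rewrite yk /sval /=; lia.
have crossed (i : 'I_n) : sval y <= i%:Z -> (i <= k)%N -> i \in support w.
  by move=> yi ik; apply: (@support_moved _ _ (k', false)); rewrite -/y sval_pos; lia.
have [c cK cy] := parabolic_chain kn hy crossed.
move: cK; rewrite inE => /andP[cK cH].
have cB := subsetP (parabolic_Bn _) c cK.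
pose w' := (w * c)%g.
have w'H : w' \in 'C(high k | 'P)%g.
  apply: (@astab_high_succ _ k'); first exact: groupM.
    by apply: groupM => //; apply: subsetP wH; apply: astab_high_le.
  by apply: sval_inj; rewrite permM cy.
have w'K : support w' \subset support w.
  apply/subsetP => i; rewrite !in_support; apply: contra => wN.
  have iw : i \notin support w by rewrite in_support wN.
  have : i \notin support c by apply: contra iw; apply/subsetP/support_sub.
  by rewrite in_support negbK => cN; rewrite groupM.
have := IH w' (groupM wB cB) w'H.
move/(subsetP (genS (imsetS _ w'K))) => w'P.
suff: (w' * c^-1)%g \in parabolic (support w) by rewrite mulgK.
by rewrite groupM ?groupV.
Qed.

Lemma deg_support (w : {perm T}) : w \in Bn n -> deg w = #|support w|.
Proof.
move=> wB; rewrite /deg -minEnat; apply/eqP; rewrite eq_le; apply/andP; split.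
  by apply: bigmin_le_cond; apply: mem_parabolic_support.
apply: le_bigmin => [|K /support_sub]; rewrite leEnat; last exact: subset_leq_card.
by rewrite (leq_trans (max_card _)) ?card_ord.
Qed.

End SignedPermutations.

Section Length.
Variable n : nat.
Local Notation T := (sT n).

Lemma has_word_len (w : {perm T}) : w \in Bn n ->
  has_word w (len w) /\ forall k, has_word w k -> (len w <= k)%N.
Proof.
move=> wB; have /mem_gen_short_word[t tN wt] : w \in <<[set gen i | i : 'I_n]>>%g.
  apply: subsetP (mem_parabolic_support wB).
  by apply/genS/subsetP => _ /imsetP[i _ ->]; apply: imset_f.
have wt' : has_word w (size t) by apply/existsP; exists (in_tuple t); rewrite wt.
have hasw : has (has_word w) (iota 0 #|{perm T}|.+1).
  by apply/hasP; exists (size t); rewrite // mem_iota ltnS.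
have lenN : (len w < #|{perm T}|.+1)%N by move: hasw; rewrite has_find size_iota.
split; first by have := nth_find 0 hasw; rewrite nth_iota.
move=> k wk; rewrite leqNgt; apply/negP => klen.
by have := before_find 0 klen; rewrite nth_iota ?wk //; apply: ltn_trans lenN.
Qed.

Lemma len1 : len (1%g : {perm T}) = 0%N.
Proof.
have [_ min1] := has_word_len (group1 (Bn_group n)).
by apply/eqP; rewrite -leqn0 min1 //; apply/existsP; exists [tuple]; rewrite big_nil.
Qed.

(* If [w = s_(t_1) s_(t_2) ... s_(t_k)] with [k = len w], then the reflection
   [s_(t_1) ^ w] is in [Inv w], as [w * s_(t_1) ^ w = s_(t_2) ... s_(t_k)]. *)
Lemma Inv_neq0 (w : {perm T}) : w \in Bn n -> w != 1%g -> Inv w != set0.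
Proof.
move=> wB w1; have [/existsP[t /eqP wt] _] := has_word_len wB.
move: t wt; case lw: (len w) => [|k] t wt.
  by move: w1; rewrite -wt tuple0 big_nil eqxx.
rewrite [t]tuple_eta big_cons in wt.
apply/set0Pn; exists (gen (thead t) ^ w)%g; rewrite inE.
apply/andP; split; first by apply/imset2P; exists (thead t) w.
have rw : (w * gen (thead t) ^ w)%g = (\prod_(i <- behead t) gen i)%g.
  by rewrite /conjg mulgA mulgV mul1g -wt mulgA gen_involutive mul1g.
have rB : (\prod_(i <- behead t) gen i)%g \in Bn n by rewrite -rw groupM ?groupJ ?gen_Bn.
have [_ /(_ k) lenr] := has_word_len rB.
by rewrite rw lw ltnS lenr //; apply/existsP; exists [tuple of behead t].
Qed.

Lemma join_irreducible_neq1 (w : {perm T}) : join_irreducible w -> w != 1%g.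
Proof.
apply: contraL => /eqP ->; rewrite /join_irreducible.
suff -> : [set v in Bn n | covers 1%g v] = set0 by rewrite cards0.
apply/setP => v; rewrite in_set0 inE; apply/negP => /andP[vB /and3P[_ /andP[v1 vI] _]].
have /set0Pn[t tI] := Inv_neq0 vB v1.
by move: (subsetP vI t tI); rewrite inE len1 ltn0 andbF.
Qed.

End Length.

Section Notation.
Variable n : nat.
Local Notation T := (sT n).
Local Open Scope ring_scope.
Variables (g : {perm T}) (A : {set T}).
Hypotheses (gB : g \in Bn n) (hnot : full_notation g = assoc_notation A).

Local Notation a := #|A|.
Local Notation p := (n - #|A|)%N.
Local Notation sortN := (sort intle (valnegA A)).
Local Notation sortC := (sort intle (valcompl A)).
Local Notation sortA := (sort intle (valA A)).

(* [x j] is the entry [x_(j+1) = g(j+1)] of the full notation of [g]. *)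
Let x j := nth 0 (full_notation g) (n + j).

Lemma size_positions : size (positions n) = (n + n)%N.
Proof. by rewrite /positions size_cat !size_map -enumT size_enum_ord. Qed.

Lemma sval_g_pos (j : 'I_n) : sval (g (j, false)) = x j.
Proof.
rewrite /x /full_notation (nth_map (j, false)) ?size_positions ?ltn_add2l //.
rewrite /positions nth_cat size_map size_enum_ord ltnNge leq_addr /= addKn.
by rewrite (nth_map j) ?size_enum_ord // nth_ord_enum.
Qed.

Lemma nth_notation_neg (j : 'I_n) :
  nth 0 (full_notation g) j = sval (g (rev_ord j, true)).
Proof.
rewrite /full_notation (nth_map (j, false)); last by rewrite size_positions ltn_addr.
rewrite /positions nth_cat size_map size_enum_ord ltn_ord.
by rewrite (nth_map j) ?size_enum_ord ?nth_ord_enum.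
Qed.

Lemma size_sortN : size sortN = a.
Proof. by rewrite size_sort size_map cardE. Qed.

Lemma size_sortA : size sortA = a.
Proof. by rewrite size_sort size_map cardE. Qed.

Lemma size_notation_parts : (a + size sortC + a)%N = (n + n)%N.
Proof.
have := size_map (fun q => sval (g q)) (positions n).
rewrite size_positions -/(full_notation g) hnot /assoc_notation !size_cat.
by rewrite size_sortN size_sortA addnA.
Qed.

Lemma card_A_le : (a <= n)%N.
Proof. by have := size_notation_parts; lia. Qed.

Lemma size_sortC : size sortC = (p + p)%N.
Proof. by have := size_notation_parts; lia. Qed.

Lemma nth_notation_compl k : (a <= k < a + (p + p))%N ->
  nth 0 (full_notation g) k = nth 0 sortC (k - a).
Proof.
move=> /andP[ak kp]; rewrite hnot /assoc_notation nth_cat size_sortN ifN -?leqNgt //.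
by rewrite nth_cat size_sortC ifT //; lia.
Qed.

Lemma nth_notation_A k : (a + (p + p) <= k)%N ->
  nth 0 (full_notation g) k = nth 0 sortA (k - a - (p + p)).
Proof.
move=> pk; rewrite hnot /assoc_notation nth_cat size_sortN ifN; last by lia.
by rewrite nth_cat size_sortC ifN //; lia.
Qed.

Lemma x_low j : (j < p)%N -> x j = nth 0 sortC (p + j).
Proof. by move=> jp; rewrite /x nth_notation_compl; [congr nth | ]; lia. Qed.

Lemma x_high j : (p <= j)%N -> x j = nth 0 sortA (j - p).
Proof.
by move=> pj; have an := card_A_le; rewrite /x nth_notation_A; [congr nth | ]; lia.
Qed.

Lemma uniq_valcompl : uniq (valcompl A).
Proof.
by rewrite /valcompl map_inj_uniq => [|? ? /sval_inj //]; apply/filter_uniq/enum_uniq.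
Qed.

Lemma uniq_valA : uniq (valA A).
Proof. by rewrite /valA map_inj_uniq ?enum_uniq // => ? ? /sval_inj. Qed.

Lemma sortC_lt i j : (i < j < p + p)%N -> nth 0 sortC i < nth 0 sortC j.
Proof.
by move=> ijp; apply: sort_intle_lt; rewrite ?uniq_valcompl // -(size_sort intle) size_sortC.
Qed.

Lemma sortA_lt i j : (i < j < a)%N -> nth 0 sortA i < nth 0 sortA j.
Proof.
by move=> ija; apply: sort_intle_lt; rewrite ?uniq_valA // -(size_sort intle) size_sortA.
Qed.

Lemma x_incr_low j : (j.+1 < p)%N -> x j < x j.+1.
Proof. by move=> jp; rewrite !x_low ?addnS ?sortC_lt //; lia. Qed.

Lemma x_incr_high j : (p <= j)%N -> (j.+1 < n)%N -> x j < x j.+1.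
Proof. by move=> pj jn; have an := card_A_le; rewrite !x_high ?subSn ?sortA_lt //; lia. Qed.

Lemma x_min_A : (0 < a)%N -> x p = mA A.
Proof. by move=> a0; rewrite x_high // subnn nth0. Qed.

Lemma x_max_compl : (a < n)%N -> x p.-1 = MA A.
Proof.
move=> an; rewrite x_low; last by lia.
by rewrite /MA ifN ?neq_ltn ?an // -nth_last size_sortC; congr nth; lia.
Qed.

(* [x_1] is the successor, in the sorted complement of [+-A], of its own
   opposite [x_(-1)]. *)
Lemma x0_gt0 : (a < n)%N -> 0 < x 0.
Proof.
move=> an; have n1 : (n.-1 < n)%N by lia.
have xneg : nth 0 (full_notation g) n.-1 = - x 0.
  rewrite (nth_notation_neg (Ordinal n1)).
  have -> : rev_ord (Ordinal n1) = Ordinal (leq_ltn_trans (leq0n _) n1).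
    by apply/val_inj => /=; lia.
  by rewrite -[(_, true)]/(sneg (_, false)) sval_Bn_sneg // sval_g_pos.
have x0C : x 0 = nth 0 sortC p by rewrite x_low ?addn0 //; lia.
rewrite nth_notation_compl in xneg; last by lia.
have := @sortC_lt (n.-1 - a) p; rewrite xneg x0C => lt.
suff: - nth 0 sortC p < nth 0 sortC p by lia.
by apply: lt; lia.
Qed.

Local Notation m := (mA A).
Local Notation M := (MA A).

Lemma sval_g_neg (j : 'I_n) : sval (g (j, true)) = - x j.
Proof. by rewrite -[(_, true)]/(sneg (_, false)) sval_Bn_sneg // sval_g_pos. Qed.

Lemma x_neq0 j : (j < n)%N -> x j != 0.
Proof. by move=> jn; rewrite -(sval_g_pos (Ordinal jn)) sval_neq0. Qed.

Lemma abs_x_le j : (j < n)%N -> `|x j| <= n%:Z.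
Proof. by move=> jn; rewrite -(sval_g_pos (Ordinal jn)) abs_sval_le. Qed.

Lemma x_inj i j : (i < n)%N -> (j < n)%N -> x i = x j -> i = j.
Proof.
move=> ilt jlt; rewrite -(sval_g_pos (Ordinal ilt)) -(sval_g_pos (Ordinal jlt)).
by move/sval_inj/perm_inj => [].
Qed.

Lemma x_eq_succ : (forall j, (j < n)%N -> x j = j.+1%:Z) -> g = 1%g.
Proof. by move=> xid; apply: Bn_eq => // j; rewrite sval_g_pos xid // perm1. Qed.

Lemma x_ge_succ j : (j < p)%N -> j.+1%:Z <= x j.
Proof.
move=> jp; have x0 : 0 < x 0 by apply: x0_gt0; lia.
by have := @incr_gap x 0 p (fun j _ => @x_incr_low j) 0%N j isT jp; lia.
Qed.

Lemma x_lower j : (j < n)%N -> (j < p)%N /\ j.+1%:Z <= x j \/ (p <= j)%N /\ m <= x j.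
Proof.
move=> jn; have [jp|pj] := ltnP j p; first by left; rewrite x_ge_succ.
right; split=> //; rewrite -x_min_A; last by lia.
by have := @incr_gap x p n x_incr_high p j _ jn; rewrite leqnn pj; lia.
Qed.

Lemma x_upper j : (j < n)%N -> (j < p)%N /\ x j <= M \/ (p <= j)%N /\ x j <= j.+1%:Z.
Proof.
move=> jn; have [jp|pj] := ltnP j p; [left | right]; split=> //.
  rewrite -x_max_compl; last by lia.
  by have := @incr_gap x 0 p (fun j _ => @x_incr_low j) j p.-1 _ _; lia.
have := abs_x_le (_ : n.-1 < n)%N.
by have := @incr_gap x p n x_incr_high j n.-1 _ _; lia.
Qed.

Lemma x_incr_all : (0 < a)%N -> (a < n)%N -> M < m ->
  forall j, (j.+1 < n)%N -> x j < x j.+1.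
Proof.
move=> a0 an Mm j jn; have [jp|pj|jp] := ltngtP j.+1 p.
- exact: x_incr_low.
- by apply: x_incr_high; lia.
- have ej : j = p.-1 by lia.
  by rewrite jp ej x_max_compl ?x_min_A.
Qed.

(* Otherwise the right half of the full notation would increase throughout,
   forcing [g = 1]. *)
Lemma notation_nondegenerate : g != 1%g -> (0 < a)%N /\ m < M.
Proof.
move=> g1; have an := card_A_le.
have not_id : ~ (forall j, (j < n)%N -> x j = j.+1%:Z) by move/x_eq_succ/eqP; apply/negP.
have [n0|n0] := posnP n; first by case: not_id => j; rewrite n0.
have xn : x n.-1 <= n%:Z by have := abs_x_le (_ : n.-1 < n)%N; lia.
have [a0|a0] := posnP a.
  case: not_id; apply: incr_eq_succ => // [j jn|]; first by apply: x_incr_low; lia.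
  by apply: x0_gt0; lia.
have m_neq0 : m != 0 by rewrite -x_min_A // x_neq0 //; lia.
split=> //; have [an'|na] := ltnP a n; last first.
  have an' : a = n by lia.
  rewrite /MA an' eqxx; have [m0|] := ltrP 0 m; last by move: m_neq0; lia.
  case: not_id; apply: incr_eq_succ => // [j jn|]; first by apply: x_incr_high; lia.
  by rewrite (_ : 0%N = p) ?x_min_A //; lia.
have [Mm|//|Mm] := ltgtP M m.
  by case: not_id; apply: incr_eq_succ => //; [exact: x_incr_all | exact: x0_gt0].
suff : p.-1 = p by lia.
by apply: x_inj; rewrite ?x_min_A ?x_max_compl //; lia.
Qed.

Lemma notation_bounds : g != 1%g ->
  [/\ m < M, m != 0, `|m| <= n%:Z, 0 < M & M <= n%:Z].
Proof.
move=> /notation_nondegenerate[a0 mM]; have an := card_A_le.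
have [m0 mn] : m != 0 /\ `|m| <= n%:Z by rewrite -x_min_A // x_neq0 ?abs_x_le //; lia.
have [an'|na] := ltnP a n; last first.
  have MmE : M = - m by rewrite /MA ifT //; apply/eqP; lia.
  by rewrite MmE in mM *; split; lia.
have := x_ge_succ (_ : p.-1 < p)%N; have := abs_x_le (_ : p.-1 < n)%N.
by rewrite x_max_compl //; split => //; lia.
Qed.

Lemma in_support_notation (i : 'I_n) : g != 1%g ->
  (i \in support g) = (m <= i%:Z < M) || (i%:Z < - m).
Proof.
move=> g1; have [a0 _] := notation_nondegenerate g1.
have [mM m0 mn M0 Mn] := notation_bounds g1.
have an := card_A_le; have pn : (p < n)%N by lia.
have [j0 j0p] : exists j : 'I_n, j = p :> nat by exists (Ordinal pn).
apply/idP/idP => [|H]; last first.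
  have [im|im] := ltrP i%:Z (- m).
    apply: (@support_moved _ _ _ (j0, true)).
    by rewrite sval_g_neg sval_neg j0p x_min_A //; lia.
  have /andP[mi iM] : m <= i%:Z < M by case/orP: H => //; lia.
  have an' : (a < n)%N by move: iM; rewrite /MA; case: eqP => [an'|]; lia.
  have [ip|pi] := leqP i p.
    apply: (@support_moved _ _ _ (j0, false)).
    by rewrite sval_g_pos sval_pos j0p x_min_A //; lia.
  have pn' : (p.-1 < n)%N by lia.
  have [j1 j1p] : exists j : 'I_n, j = p.-1 :> nat by exists (Ordinal pn').
  apply: (@support_moved _ _ _ (j1, false)).
  by rewrite sval_g_pos sval_pos j1p x_max_compl //; lia.
apply: contraTT => H; rewrite in_support negbK.
have [im|mi] := ltrP i%:Z m.
  apply/astabs_permP => -[j []]; rewrite !inE ?sval_neg; first lia.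
  by rewrite sval_pos sval_g_pos; have := x_lower (ltn_ord j); lia.
rewrite -astabsC; apply/astabs_permP => -[j []]; rewrite !inE -!leNgt.
  by rewrite sval_neg sval_g_neg; have := x_lower (ltn_ord j); lia.
by rewrite sval_pos sval_g_pos; have := x_upper (ltn_ord j); lia.
Qed.

Lemma card_support_notation : g != 1%g ->
  #|support g| = if 0 < m then `|M - m|%N else maxn `|M| `|m|.
Proof.
move=> g1; have [mM m0 mn M0 Mn] := notation_bounds g1; case: ltrP => m_pos.
  by rewrite (card_ord_range (lo := `|m|) (hi := `|M|)) => *;
    rewrite ?in_support_notation; lia.
by rewrite (card_ord_range (lo := 0) (hi := maxn `|M| `|m|)) => *;
  rewrite ?in_support_notation; lia.
Qed.

Lemma cnt_notation : g != 1%g ->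
  cnt A = if 0 < m then `|M - m|.-1 else (`|M| + `|m|).-2.
Proof.
move=> g1; have [mM m0 mn M0 Mn] := notation_bounds g1.
rewrite /cnt card_sT_split; case: ltrP => m_pos.
  rewrite (card_ord_range (lo := `|m|) (hi := `|M|.-1)) ?(card_ord_range (lo := 0) (hi := 0));
    by move=> *; rewrite ?inE ?sval_pos ?sval_neg; lia.
rewrite (card_ord_range (lo := 0) (hi := `|M|.-1)) ?(card_ord_range (lo := 0) (hi := `|m|.-1));
  by move=> *; rewrite ?inE ?sval_pos ?sval_neg; lia.
Qed.

End Notation.

Theorem lemma3p7 (n : nat) (g : {perm sT n}) (A : {set sT n}) :
  g \in Bn n -> join_irreducible g ->
  signed_subset A -> full_notation g = assoc_notation A ->
  (deg g = 1%N <-> cnt A = 0%N) /\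
  (deg g = 2%N <-> (cnt A = 1%N \/ (mA A = (-2)%R /\ MA A = 2%R))).
Proof.
move=> gB /join_irreducible_neq1 g1 _ hnot.
have [mM m0 mn M0 Mn] := notation_bounds gB hnot g1.
rewrite deg_support // (card_support_notation gB hnot g1) (cnt_notation gB hnot g1).
by case: ltrP => m_pos; split; split; lia.
Qed.
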